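(* There is an absolute constant $C>0$ such that the following holds. Let $n,d,k\ge1$, let $\phi:\mathbb{R}\to\mathbb{R}$ be $L$-Lipschitz with $\phi(0)=0$, let $b>0$, and let $x_1,\dots,x_n,x'_1,\dots,x'_n\in\mathbb{R}^d$ satisfy $\|x_i\|_2,\|x'_i\|_2\le b$. For $a>0$ let $\mathcal{G}^k_a=\{A\in\mathbb{R}^{d\times k}:\|A\|_{2,\infty}\le a\}$. Then $$\widehat{\mathfrak{R}}\big(\mathcal{F}_k(\mathcal{G}^k_a)\big)\le C\left(\frac1n+\frac{a^2b^2L^2}{\sqrt n}\sqrt{\log(2d)}\,\log\big(2+n\,b^2a^2L^2\big)\right);$$ in particular the bound does not depend on $k$.
   Context: For $A\in\mathbb{R}^{d\times k}$ with columns $A_{\cdot 1},\dots,A_{\cdot k}$: $\|A\|_{2,\infty}=\max_{j\le k}\|A_{\cdot j}\|_2$. For $u,v\in\mathbb{R}^k$, $\zeta_k(u,v)=\frac1k\|u-v\|_2^2$. The function $\phi$ is applied coordinatewise to vectors. Given fixed points $x_1,\dots,x_n,x'_1,\dots,x'_n\in\mathbb{R}^d$ and a set $\mathcal{G}\subset\mathbb{R}^{d\times k}$, define $\mathcal{F}_k(\mathcal{G})=\{(\zeta_k(\phi(A^tx_i),\phi(A^tx'_i)))_{i=1}^n : A\in\mathcal{G}\}\subset\mathbb{R}^n$. For a set $\mathcal{F}\subset\mathbb{R}^n$, $\widehat{\mathfrak{R}}(\mathcal{F})=\frac1n\mathbb{E}_\varepsilon\sup_{f\in\mathcal{F}}\sum_{i=1}^n\varepsilon_if_i$,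 where $\varepsilon_1,\dots,\varepsilon_n$ are i.i.d. uniform on $\{-1,1\}$. *)

From HB Require Import structures.
From mathcomp Require Import all_boot all_order all_algebra.
From mathcomp Require Import all_classical all_reals all_analysis.
Set Implicit Arguments. Unset Strict Implicit. Unset Printing Implicit Defensive.
Import Order.TTheory GRing.Theory Num.Theory.
Local Open Scope classical_set_scope.
Local Open Scope ring_scope.

Section Defs.
Variable R : realType.

Definition norm2 (m : nat) (v : 'cV[R]_m) : R :=
  Num.sqrt (\sum_(j < m) (v j 0) ^+ 2).

Definition norm2inf (d k : nat) (A : 'M[R]_(d, k)) : R :=
  \big[Num.max/0]_(j < k) norm2 (col j A).

Definition zeta (k : nat) (u v : 'cV[R]_k) : R :=
  (k%:R)^-1 * (\sum_(j < k) (u j 0 - v j 0) ^+ 2).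

Definition phivec (phi : R -> R) (k : nat) (u : 'cV[R]_k) : 'cV[R]_k :=
  map_mx phi u.

Definition Gball (d k : nat) (a : R) : set 'M[R]_(d, k) :=
  [set A | norm2inf A <= a].

Definition Fk (n d k : nat) (phi : R -> R) (x x' : 'I_n -> 'cV[R]_d)
  (G : set 'M[R]_(d, k)) : set ('I_n -> R) :=
  [set (fun i => zeta (phivec phi (A^T *m x i)) (phivec phi (A^T *m x' i)))
     | A in G].

Definition sgn (b : bool) : R := if b then 1 else -1.

(* Empirical Rademacher complexity (in extended reals, sup = ereal_sup):
   (1/n) * E_eps sup_{f in F} sum_i eps_i f_i, with eps uniform on {-1,1}^n *)
Definition rademacher (n : nat) (F : set ('I_n -> R)) : \bar R :=
  (((n%:R)^-1 / 2 ^+ n)%:E *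
   \sum_(eps : {ffun 'I_n -> bool})
      ereal_sup [set (\sum_(i < n) sgn (eps i) * f i)%:E | f in F])%E.

End Defs.

From HB Require Import structures.
From mathcomp Require Import all_boot all_order all_algebra.
From mathcomp Require Import all_classical all_reals all_analysis.
From mathcomp Require Import ring lra.
Import Order.TTheory GRing.Theory Num.Theory.
Set Implicit Arguments. Unset Strict Implicit. Unset Printing Implicit Defensive.
Local Open Scope classical_set_scope.
Local Open Scope ring_scope.

(* 1. zeta averages over the k columns of A the squared differences
      (phi <w, x_i> - phi <w, x'_i>)^2, w = A_j; each column lies in the
      Euclidean ball of radius a, so the supremum over G^k_a is at most the
      supremum over a single column w in that ball (rademacher_single_column).
   2. Ledoux-Talagrand contraction (contraction), proved one coordinate at a
      time from a two-point inequality for suprema, first replaces t |-> t^2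
      (2D-Lipschitz on [-D, D]) by a linear map and then phi by L times the
      identity (sqdiff_rademacher, lipschitz_rademacher).
   3. For the linear class w |-> <w, y_i> on the ball, a parametrised AM-GM
      bound on <w, V>, averaged over signs with the second-moment identity and
      optimised in the parameter, gives a b sqrt n (linear_rademacher).
   Together: R(F_k(G^k_a)) <= 8 a^2 b^2 L^2 / sqrt n (rademacher_Fk_rate), and
   the stated bound follows with C = 8 / (sqrt (ln 2) ln 2), since both
   logarithmic factors are at least ln 2 (rate_le).
   Rademacher averages are kept unnormalised, as sums over all 2^n sign
   vectors e : {ffun 'I_n -> bool}. *)

Section Suprema.
Variables (R : realType) (P : Type).
Implicit Types (G : set P) (f g : P -> R).

(* The real supremum of f over G; it is the true supremum whenever G is
   nonempty and f is bounded above on G. *)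
Definition supf G f : R := sup [set f p | p in G].

Definition bounded_above G f := exists B : R, forall p, G p -> f p <= B.

Lemma supf_ub G f p : bounded_above G f -> G p -> f p <= supf G f.
Proof.
move=> [B hB] Gp; apply: ub_le_sup; last by exists p.
by exists B => _ [q Gq <-]; exact: hB.
Qed.

Lemma supf_le G f B : G !=set0 -> (forall p, G p -> f p <= B) -> supf G f <= B.
Proof.
move=> [p Gp] hB; apply: ge_sup; first by exists (f p), p.
by move=> _ [q Gq <-]; exact: hB.
Qed.

Lemma supf_add G f g : G !=set0 -> bounded_above G f -> bounded_above G g ->
  supf G (fun p => f p + g p) <= supf G f + supf G g.
Proof.
by move=> G0 hf hg; apply: supf_le => // p Gp; apply: lerD; apply: supf_ub.
Qed.

(* Pairing p with q gives
   c p + a p + c q - a q <= c p + c q + |u p - u q|, and the right-hand side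
   is one of the two cross sums (c + u)(p) + (c - u)(q), (c + u)(q) + (c - u)(p). *)
Lemma sup_pair_contraction G c a u (B : R) : G !=set0 -> bounded_above G c ->
  (forall p, G p -> `|u p| <= B) ->
  (forall p q, G p -> G q -> `|a p - a q| <= `|u p - u q|) ->
  supf G (fun p => c p + a p) + supf G (fun p => c p - a p) <=
  supf G (fun p => c p + u p) + supf G (fun p => c p - u p).
Proof.
move=> G0 [Bc hc] uB hL.
have ubu : bounded_above G (fun p => c p + u p).
  exists (Bc + B) => p Gp; apply: lerD; first exact: hc.
  exact: le_trans (ler_norm _) (uB _ Gp).
have ubu' : bounded_above G (fun p => c p - u p).
  exists (Bc + B) => p Gp; apply: lerD; first exact: hc.
  by apply: le_trans (ler_norm _) _; rewrite normrN; exact: uB.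
set T := _ + supf G (fun p => c p - u p).
have cross p q : G p -> G q -> c p + u p + (c q - u q) <= T.
  by move=> Gp Gq; apply: lerD; [exact: supf_ub ubu Gp|exact: supf_ub ubu' Gq].
have pair p q : G p -> G q -> c p + a p + (c q - a q) <= T.
  move=> Gp Gq; have := le_trans (ler_norm _) (hL p q Gp Gq).
  have := cross p q Gp Gq; have := cross q p Gq Gp.
  by case: (lerP (u q) (u p)); lra.
have : supf G (fun p => c p + a p) <= T - supf G (fun p => c p - a p).
  apply: supf_le => // p Gp; rewrite lerBrDr addrC -lerBrDr.
  by apply: supf_le => // q Gq; have := pair p q Gp Gq; lra.
lra.
Qed.

End Suprema.

Section SignVectors.
Variable R : realType.

Lemma sgnN (s : bool) : sgn R (~~ s) = - sgn R s.
Proof. by case: s; rewrite /sgn /= ?opprK. Qed.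

Lemma sgn_sq (s : bool) : sgn R s * sgn R s = 1.
Proof. by case: s; rewrite /sgn ?mul1r ?mulN1r ?opprK. Qed.

Lemma norm_sgnM (s : bool) (x : R) : `|sgn R s * x| = `|x|.
Proof. by case: s; rewrite /sgn ?mul1r ?mulN1r ?normrN. Qed.

Definition flip n (j : 'I_n) (e : {ffun 'I_n -> bool}) : {ffun 'I_n -> bool} :=
  [ffun i => if i == j then ~~ e i else e i].

Lemma flipK n (j : 'I_n) : involutive (flip j).
Proof.
by move=> e; apply/ffunP => i; rewrite !ffunE; case: eqP => _ //; rewrite negbK.
Qed.

Lemma flip_at n (j : 'I_n) e : flip j e j = ~~ e j.
Proof. by rewrite ffunE eqxx. Qed.

Lemma flip_ne n (j i : 'I_n) e : i != j -> flip j e i = e i.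
Proof. by rewrite ffunE => /negbTE ->. Qed.

Lemma sum_flip n (j : 'I_n) (F : {ffun 'I_n -> bool} -> R) :
  \sum_e F e = \sum_e F (flip j e).
Proof. exact: reindex_inj (inv_inj (flipK j)). Qed.

Lemma card_signs n : \sum_(e : {ffun 'I_n -> bool}) (1 : R) = 2 ^+ n.
Proof. by rewrite sumr_const card_ffun card_bool card_ord natrX. Qed.

Lemma sgn_corr n (i i' : 'I_n) :
  \sum_(e : {ffun 'I_n -> bool}) sgn R (e i) * sgn R (e i') =
  if i == i' then 2 ^+ n else 0.
Proof.
case: eqP => [<-|ne]; first by under eq_bigr do rewrite sgn_sq; rewrite card_signs.
set S := \sum_e _; suff : S = - S by lra.
rewrite {1}/S (sum_flip i) -sumrN; apply: eq_bigr => e _.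
by rewrite flip_at flip_ne ?sgnN ?mulNr //; apply/eqP => /esym.
Qed.

Lemma second_moment n (z : 'I_n -> R) :
  \sum_(e : {ffun 'I_n -> bool}) (\sum_i sgn R (e i) * z i) ^+ 2
  = 2 ^+ n * \sum_i z i ^+ 2.
Proof.
have expand e : (\sum_i sgn R (e i) * z i) ^+ 2 =
    \sum_i \sum_i' (z i * z i') * (sgn R (e i) * sgn R (e i')).
  rewrite expr2 big_distrl /=; apply: eq_bigr => i _.
  by rewrite big_distrr /=; apply: eq_bigr => i' _; ring.
under eq_bigr do rewrite expand.
rewrite exchange_big /= big_distrr /=; apply: eq_bigr => i _.
rewrite exchange_big /=; under eq_bigr do rewrite -mulr_sumr sgn_corr.
rewrite (bigD1 i) //= eqxx big1 ?addr0; first by rewrite expr2 mulrC.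
by move=> i' /negbTE; rewrite eq_sym => ->; rewrite mulr0.
Qed.

End SignVectors.

Section Contraction.
Variables (R : realType) (P : Type) (G : set P) (n : nat).
Hypothesis G0 : G !=set0.

(* sup_{p in G} sum_i e_i v_i(p): the Rademacher supremum for the sign
   vector e; summing it over all e gives 2^n n times the empirical
   Rademacher complexity of the class {(v_i p)_i | p in G}. *)
Definition rad_sup (v : 'I_n -> P -> R) (e : {ffun 'I_n -> bool}) : R :=
  supf G (fun p => \sum_i sgn R (e i) * v i p).

Lemma bounded_sign_sum (v : 'I_n -> P -> R) (B : R) (e : {ffun 'I_n -> bool})
    (Q : pred 'I_n) : (forall i p, G p -> `|v i p| <= B) ->
  bounded_above G (fun p => \sum_(i | Q i) sgn R (e i) * v i p).
Proof.
move=> vB; exists (\sum_(i | Q i) B) => p Gp; apply: ler_sum => i _.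
by apply: le_trans (ler_norm _) _; rewrite norm_sgnM; exact: vB.
Qed.

Lemma rad_sup_add (v w : 'I_n -> P -> R) (B : R) e :
  (forall i p, G p -> `|v i p| <= B) -> (forall i p, G p -> `|w i p| <= B) ->
  rad_sup (fun i p => v i p + w i p) e <= rad_sup v e + rad_sup w e.
Proof.
move=> vB wB; rewrite /rad_sup.
under eq_fun do under eq_bigr do rewrite mulrDr; under eq_fun do rewrite big_split.
by apply: supf_add => //; [exact: bounded_sign_sum vB|exact: bounded_sign_sum wB].
Qed.

(* Contraction in a single coordinate j: a and u agree off j, and the
   increments of a_j are dominated by those of u_j.  Pair each sign vector
   with its j-flip and apply the two-point inequality. *)
Lemma contraction_coord (j : 'I_n) (a u : 'I_n -> P -> R) (B : R) :
  (forall i p, G p -> `|u i p| <= B) -> (forall i, i != j -> a i = u i) ->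
  (forall p q, G p -> G q -> `|a j p - a j q| <= `|u j p - u j q|) ->
  \sum_e rad_sup a e <= \sum_e rad_sup u e.
Proof.
move=> uB a_u Lj.
pose c e p := \sum_(i | i != j) sgn R (e i) * u i p.
have split_j v e : (forall i, i != j -> v i = u i) ->
    rad_sup v e = supf G (fun p => c e p + sgn R (e j) * v j p) /\
    rad_sup v (flip j e) = supf G (fun p => c e p - sgn R (e j) * v j p).
  move=> v_u; split; congr supf; apply: funext => p; rewrite (bigD1 j) //= addrC.
    by congr (_ + _); apply: eq_bigr => i ji; rewrite v_u.
  rewrite flip_at sgnN mulNr; congr (_ - _); apply: eq_bigr => i ji.
  by rewrite v_u // flip_ne.
have pair e : rad_sup a e + rad_sup a (flip j e) <= rad_sup u e + rad_sup u (flip j e).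
  have [-> ->] := split_j a e a_u; have [-> ->] := split_j u e (fun _ _ => erefl).
  apply: (sup_pair_contraction (B := B)) => //.
  - exact: bounded_sign_sum uB.
  - by move=> p Gp; rewrite norm_sgnM; exact: uB.
  - by move=> p q Gp Gq; rewrite -!mulrBr !norm_sgnM; exact: Lj.
have : \sum_e (rad_sup a e + rad_sup a (flip j e)) <=
        \sum_e (rad_sup u e + rad_sup u (flip j e)).
  by apply: ler_sum => e _; exact: pair.
by rewrite !big_split /= -!sum_flip; lra.
Qed.

(* Interpolate between a and u by hybrids that use u on the first m
   coordinates; consecutive hybrids differ in one coordinate only. *)
Lemma contraction (a u : 'I_n -> P -> R) (B : R) :
  (forall i p, G p -> `|a i p| <= B) -> (forall i p, G p -> `|u i p| <= B) ->
  (forall i p q, G p -> G q -> `|a i p - a i q| <= `|u i p - u i q|) ->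
  \sum_e rad_sup a e <= \sum_e rad_sup u e.
Proof.
move=> aB uB Lip.
pose hyb m (i : 'I_n) := if (i < m)%N then u i else a i.
have hybB m i p : G p -> `|hyb m i p| <= B by rewrite /hyb; case: ifP => _; auto.
have step m : \sum_e rad_sup (hyb m) e <= \sum_e rad_sup (hyb m.+1) e.
  case: (ltnP m n) => [mn|nm]; last first.
    suff -> : hyb m = hyb m.+1 by [].
    apply: funext => i; rewrite /hyb !(leq_trans (ltn_ord i)) //; exact: leqW.
  apply: (contraction_coord (j := Ordinal mn) (B := B)) => //.
  - exact: hybB.
  - by move=> i; rewrite -val_eqE /hyb ltnS (leq_eqVlt i) /= => /negbTE ->.
  - by move=> p q Gp Gq; rewrite /hyb ltnn ltnSn; exact: Lip.
have mono m : \sum_e rad_sup (hyb 0) e <= \sum_e rad_sup (hyb m) e.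
  by elim: m => [|m IH] //; exact: le_trans IH (step m).
have -> : a = hyb 0 by apply: funext => i; rewrite /hyb ltn0.
have -> : u = hyb n by apply: funext => i; rewrite /hyb ltn_ord.
exact: mono.
Qed.

End Contraction.

Section LinearClass.
Variable R : realType.

Definition dot (d : nat) (w v : 'cV[R]_d) : R := \sum_l w l 0 * v l 0.

Definition l2ball (d : nat) (a : R) : set 'cV[R]_d := [set w | norm2 w <= a].

Lemma l2ball_neq0 d (a : R) : 0 <= a -> @l2ball d a !=set0.
Proof.
move=> a0; exists 0; rewrite /l2ball /= /norm2 big1 ?sqrtr0 // => l _.
by rewrite mxE expr2 mulr0.
Qed.

Lemma norm2_sq_le d (w : 'cV[R]_d) a : norm2 w <= a -> \sum_l w l 0 ^+ 2 <= a ^+ 2.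
Proof.
have S0 : 0 <= \sum_l w l 0 ^+ 2 by apply: sumr_ge0 => l _; exact: sqr_ge0.
rewrite /norm2 => h; rewrite -(sqr_sqrtr S0) !expr2.
by apply: ler_pM => //; exact: sqrtr_ge0.
Qed.

Lemma amgm (t w v : R) : 0 < t -> `|w * v| <= (t * w ^+ 2 + v ^+ 2 / t) / 2.
Proof.
move=> t0; rewrite -subr_ge0.
have -> : (t * w ^+ 2 + v ^+ 2 / t) / 2 - `|w * v| = (t * `|w| - `|v|) ^+ 2 / (2 * t).
  by rewrite normrM -[w ^+ 2]real_normK ?num_real // -[v ^+ 2]real_normK ?num_real //;
     field; exact: lt0r_neq0.
by apply: divr_ge0; [exact: sqr_ge0|apply: mulr_ge0 => //; exact: ltW].
Qed.

(* Parametrised Cauchy-Schwarz: optimising over t recovers |<w,v>| <= |w| |v|,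
   but keeping t free lets us average over sign vectors before optimising,
   which replaces the use of Jensen's inequality. *)
Lemma dot_amgm d (w v : 'cV[R]_d) t : 0 < t ->
  `|dot w v| <= (t * \sum_l w l 0 ^+ 2 + (\sum_l v l 0 ^+ 2) / t) / 2.
Proof.
move=> t0; apply: le_trans (ler_norm_sum _ _ _) _.
rewrite big_distrr /= mulr_suml -big_split /= mulr_suml.
by apply: ler_sum => l _; exact: amgm.
Qed.

Lemma abs_dot d (w v : 'cV[R]_d) a b : 0 < a -> 0 < b ->
  norm2 w <= a -> norm2 v <= b -> `|dot w v| <= a * b.
Proof.
move=> a0 b0 /norm2_sq_le hw /norm2_sq_le hv.
have t0 : 0 < b / a by exact: divr_gt0.
apply: le_trans (dot_amgm w v t0) _.
apply: le_trans (_ : (b / a * a ^+ 2 + b ^+ 2 / (b / a)) / 2 <= _).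
  apply: ler_wpM2r; first by rewrite invr_ge0 ler0n.
  apply: lerD; first by apply: ler_wpM2l => //; exact: ltW.
  by apply: ler_wpM2r => //; rewrite invr_ge0; exact: ltW.
by rewrite le_eqVlt; apply/orP; left; apply/eqP; field;
   rewrite (lt0r_neq0 a0) (lt0r_neq0 b0).
Qed.

Section LinearRademacher.
Variables (n d : nat) (a b c : R) (y : 'I_n -> 'cV[R]_d).
Hypotheses (n0 : (0 < n)%N) (a0 : 0 < a) (b0 : 0 < b).
Hypothesis yb : forall i, norm2 (y i) <= b.

(* For a sign vector e, the Rademacher sum of the class
   {(c <w, y_i>)_i | |w| <= a} is <w, V e> with V e = c sum_i e_i y_i. *)
Let V (e : {ffun 'I_n -> bool}) : 'cV[R]_d := \col_l \sum_i sgn R (e i) * (c * y i l 0).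

Lemma signed_sum_norm :
  \sum_e \sum_l V e l 0 ^+ 2 <= 2 ^+ n * (c ^+ 2 * (n%:R * b ^+ 2)).
Proof.
rewrite exchange_big /=; under eq_bigr do under eq_bigr do rewrite mxE.
under eq_bigr do rewrite second_moment.
rewrite -big_distrr /=; apply: ler_wpM2l; first exact: exprn_ge0.
have -> : n%:R * b ^+ 2 = \sum_(i < n) b ^+ 2 by rewrite sumr_const card_ord mulr_natl.
rewrite exchange_big big_distrr /=.
apply: ler_sum => i _; under eq_bigr do rewrite exprMn.
by rewrite -big_distrr /=; apply: ler_wpM2l; [exact: sqr_ge0|exact: norm2_sq_le].
Qed.

(* Bounding each sup by dot_amgm with the same parameter t for all e. *)
Lemma linear_rademacher_param t : 0 < t ->
  \sum_e rad_sup (l2ball a) (fun i w => c * dot w (y i)) e <=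
  (2 ^+ n * (t * a ^+ 2) + 2 ^+ n * (c ^+ 2 * (n%:R * b ^+ 2)) / t) / 2.
Proof.
move=> t0.
have each e : rad_sup (l2ball a) (fun i w => c * dot w (y i)) e <=
    (t * a ^+ 2 + (\sum_l V e l 0 ^+ 2) / t) / 2.
  apply: supf_le; first exact/l2ball_neq0/ltW.
  move=> w hw; have -> : \sum_i sgn R (e i) * (c * dot w (y i)) = dot w (V e).
    rewrite /dot; under [RHS]eq_bigr do rewrite mxE big_distrr /=.
    rewrite exchange_big /=; apply: eq_bigr => i _.
    by rewrite !big_distrr /=; apply: eq_bigr => l _; ring.
  apply: le_trans (ler_norm _) _; apply: le_trans (dot_amgm w (V e) t0) _.
  apply: ler_wpM2r; first by rewrite invr_ge0 ler0n.
  by apply: lerD => //; apply: ler_wpM2l; [exact: ltW|exact: norm2_sq_le].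
apply: le_trans (_ : _ <= \sum_e (t * a ^+ 2 + (\sum_l V e l 0 ^+ 2) / t) / 2) _.
  by apply: ler_sum => e _; exact: each.
rewrite -big_distrl /= big_split /=.
have -> : \sum_(e : {ffun 'I_n -> bool}) t * a ^+ 2 = 2 ^+ n * (t * a ^+ 2).
  by rewrite -card_signs mulr_suml; apply: eq_bigr => e _; rewrite mul1r.
rewrite -big_distrl /=.
apply: ler_wpM2r; first by rewrite invr_ge0 ler0n.
apply: lerD => //; apply: ler_wpM2r; [by rewrite invr_ge0 ltW|exact: signed_sum_norm].
Qed.

(* Rademacher complexity of a linear class over the ball: |c| a b / sqrt n;
   take t = |c| b sqrt n / a above. *)
Lemma linear_rademacher :
  \sum_e rad_sup (l2ball a) (fun i w => c * dot w (y i)) e <=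
  2 ^+ n * (`|c| * a * b * Num.sqrt n%:R).
Proof.
have [->|c0] := eqVneq c 0.
  rewrite normr0 !mul0r mulr0; apply: sumr_le0 => e _.
  apply: supf_le; first exact/l2ball_neq0/ltW.
  by move=> w _; rewrite big1 // => i _; rewrite mul0r mulr0.
have cn0 : 0 < `|c| by rewrite normr_gt0.
have sn0 : 0 < Num.sqrt (n%:R : R) by rewrite sqrtr_gt0 ltr0n.
have t0 : 0 < `|c| * b * Num.sqrt n%:R / a by do !apply: mulr_gt0; rewrite ?invr_gt0.
apply: le_trans (linear_rademacher_param t0) _.
rewrite le_eqVlt; apply/orP; left; apply/eqP.
have sq_sqrt : Num.sqrt (n%:R : R) ^+ 2 = n%:R by rewrite sqr_sqrtr ?ler0n.
rewrite -(real_normK (num_real c)); move: sq_sqrt sn0.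
move: (Num.sqrt n%:R) => s <- s0.
by field; rewrite (lt0r_neq0 a0) (lt0r_neq0 b0) (lt0r_neq0 s0) (lt0r_neq0 cn0).
Qed.

End LinearRademacher.
End LinearClass.

Section LipschitzClass.
Variables (R : realType) (n d : nat) (phi : R -> R) (L a b : R).
Hypotheses (n0 : (0 < n)%N) (a0 : 0 < a) (b0 : 0 < b) (L0 : 0 <= L).
Hypothesis phi_lip : forall u v, `|phi u - phi v| <= L * `|u - v|.
Hypothesis phi0 : phi 0 = 0.

Lemma phi_dot_bound (w v : 'cV[R]_d) :
  norm2 w <= a -> norm2 v <= b -> `|phi (dot w v)| <= L * (a * b).
Proof.
move=> hw hv; have := phi_lip (dot w v) 0; rewrite phi0 !subr0 => /le_trans; apply.
by apply: ler_wpM2l => //; exact: abs_dot.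
Qed.

(* Composing the linear class with the L-Lipschitz phi costs a factor L:
   contraction against the linear functions w |-> c L <w, y_i>. *)
Lemma lipschitz_rademacher (c : R) (y : 'I_n -> 'cV[R]_d) :
  (forall i, norm2 (y i) <= b) ->
  \sum_e rad_sup (l2ball a) (fun i w => c * phi (dot w (y i))) e <=
  2 ^+ n * (`|c| * L * a * b * Num.sqrt n%:R).
Proof.
move=> yb; apply: le_trans (_ : _ <=
  \sum_e rad_sup (l2ball a) (fun i w => (c * L) * dot w (y i)) e) _; last first.
  by apply: le_trans (linear_rademacher (c * L) n0 a0 b0 yb) _; rewrite normrM (ger0_norm L0).
apply: (contraction (l2ball_neq0 d (ltW a0)) (B := `|c| * L * (a * b))).
- move=> i w hw; rewrite normrM -mulrA; apply: ler_wpM2l => //.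
  exact: phi_dot_bound.
- move=> i w hw; rewrite normrM normrM (ger0_norm L0); apply: ler_wpM2l.
    exact: mulr_ge0.
  exact: abs_dot.
- move=> i w w' _ _; rewrite -!mulrBr !normrM (ger0_norm L0) -mulrA.
  by apply: ler_wpM2l => //; exact: phi_lip.
Qed.

End LipschitzClass.

Lemma col_l2ball (R : realType) d k (A : 'M[R]_(d, k)) (a : R) j :
  @Gball R d k a A -> l2ball a (col j A).
Proof. by apply: le_trans; exact: le_bigmax. Qed.

Section PairDistanceClass.
Variables (R : realType) (n d k : nat) (phi : R -> R) (L a b : R).
Variables (x x' : 'I_n -> 'cV[R]_d).
Hypotheses (n0 : (0 < n)%N) (k0 : (0 < k)%N) (L0 : 0 <= L).
Hypothesis phi_lip : forall u v, `|phi u - phi v| <= L * `|u - v|.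
Hypothesis phi0 : phi 0 = 0.
Hypotheses (b0 : 0 < b) (xb : forall i, norm2 (x i) <= b) (x'b : forall i, norm2 (x' i) <= b).
Hypothesis a0 : 0 < a.

Let sqdiff (i : 'I_n) (w : 'cV[R]_d) := (phi (dot w (x i)) - phi (dot w (x' i))) ^+ 2.

Let bound_diff i w : l2ball a w ->
  `|phi (dot w (x i)) - phi (dot w (x' i))| <= 2 * (L * (a * b)).
Proof.
move=> hw; apply: le_trans (ler_normB _ _) _.
have := phi_dot_bound a0 b0 L0 phi_lip phi0 hw (xb i).
have := phi_dot_bound a0 b0 L0 phi_lip phi0 hw (x'b i); lra.
Qed.

Lemma zeta_columns (A : 'M[R]_(d, k)) i :
  zeta (phivec phi (A^T *m x i)) (phivec phi (A^T *m x' i)) =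
  k%:R^-1 * \sum_j sqdiff i (col j A).
Proof.
rewrite /zeta; congr (_ * _); apply: eq_bigr => j _.
by rewrite /sqdiff /phivec !mxE /dot; congr ((phi _ - phi _) ^+ 2);
   apply: eq_bigr => l _; rewrite !mxE.
Qed.

(* Since zeta is an average over columns, the supremum over G^k_a is at most
   the supremum over a single column ranging in the ball: the Rademacher
   complexity does not depend on k. *)
Lemma rademacher_single_column :
  (rademacher (Fk phi x x' (@Gball R d k a)) <=
   ((n%:R^-1 / 2 ^+ n) * \sum_e rad_sup (l2ball a) sqdiff e)%:E)%E.
Proof.
rewrite /rademacher (EFinM (n%:R^-1 / 2 ^+ n)) -sumEFin; apply: lee_wpmul2l.
  by rewrite lee_fin; apply: divr_ge0; [rewrite invr_ge0 ler0n|exact: exprn_ge0].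
apply: lee_sum => e _; apply: ge_ereal_sup => _ [f [A hA <-] <-]; rewrite lee_fin.
under eq_bigr do rewrite zeta_columns.
have -> : \sum_i sgn R (e i) * (k%:R^-1 * \sum_j sqdiff i (col j A)) =
    k%:R^-1 * \sum_(j < k) \sum_i sgn R (e i) * sqdiff i (col j A).
  rewrite exchange_big big_distrr /=; apply: eq_bigr => i _.
  by rewrite !big_distrr /=; apply: eq_bigr => j _; ring.
have kpos : 0 < k%:R :> R by rewrite ltr0n.
rewrite ler_pdivrMl // -[k in k%:R](card_ord k) mulr_natl -sumr_const.
apply: ler_sum => j _; apply: supf_ub; last exact: col_l2ball.
apply: (bounded_sign_sum (B := (2 * (L * (a * b))) ^+ 2)) => i w hw.
by rewrite /sqdiff normrX !expr2; apply: ler_pM => //; exact: bound_diff.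
Qed.

(* Rademacher bound for the squared differences: t |-> t^2 is 2D-Lipschitz
   on [-D, D], D = 2 L a b, so contraction reduces sqdiff to the difference
   of two Lipschitz-composed linear classes, each bounded by
   lipschitz_rademacher. *)
Lemma sqdiff_rademacher :
  \sum_e rad_sup (l2ball a) sqdiff e <=
  2 ^+ n * (8 * (a ^+ 2 * b ^+ 2 * L ^+ 2) * Num.sqrt n%:R).
Proof.
set D := 2 * (L * (a * b)); set K := 2 * D.
have LB0 : 0 <= L * (a * b) by apply: mulr_ge0 => //; apply: mulr_ge0; exact: ltW.
have K0 : 0 <= K by rewrite /K /D; apply: mulr_ge0 => //; apply: mulr_ge0.
have ball0 := l2ball_neq0 d (ltW a0).
pose p i w := phi (dot w (x i)); pose q i w := phi (dot w (x' i)).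
have pB i w : l2ball a w -> `|K * p i w| <= K * (L * (a * b)).
  by move=> hw; rewrite normrM (ger0_norm K0) ler_wpM2l // phi_dot_bound.
have qB i w : l2ball a w -> `|- K * q i w| <= K * (L * (a * b)).
  by move=> hw; rewrite normrM normrN (ger0_norm K0) ler_wpM2l // phi_dot_bound.
apply: le_trans (_ : _ <= \sum_e rad_sup (l2ball a) (fun i w => K * (p i w - q i w)) e) _.
  apply: (contraction ball0 (B := K * D)).
  - move=> i w hw; rewrite /sqdiff normrX expr2.
    have D0 : 0 <= D by rewrite /D; apply: mulr_ge0.
    apply: (@le_trans _ _ (D * D)); first by apply: ler_pM => //; exact: bound_diff.
    by rewrite ler_wpM2r // /K; lra.
  - by move=> i w hw; rewrite normrM (ger0_norm K0) ler_wpM2l // bound_diff.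
  - move=> i w w' hw hw'; rewrite /sqdiff subr_sqr normrM -mulrBr normrM (ger0_norm K0) mulrC.
    apply: ler_wpM2r => //; apply: le_trans (ler_normD _ _) _.
    by have := bound_diff i hw; have := bound_diff i hw'; rewrite /K /D /p /q; lra.
have split_pq : (fun i w => K * (p i w - q i w)) = (fun i w => K * p i w + - K * q i w).
  by do 2!apply: funext => ?; ring.
rewrite split_pq; apply: le_trans (_ : _ <= \sum_e (rad_sup (l2ball a) (fun i w => K * p i w) e
    + rad_sup (l2ball a) (fun i w => - K * q i w) e)) _.
  by apply: ler_sum => e _; apply: (rad_sup_add ball0 (B := K * (L * (a * b)))).
rewrite big_split /=.
apply: le_trans (lerD (lipschitz_rademacher n0 a0 b0 L0 phi_lip phi0 K xb)
                      (lipschitz_rademacher n0 a0 b0 L0 phi_lip phi0 (- K) x'b)) _.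
by rewrite normrN (ger0_norm K0) /K /D le_eqVlt; apply/orP; left; apply/eqP; ring.
Qed.

Lemma rademacher_Fk_rate :
  (rademacher (Fk phi x x' (@Gball R d k a)) <=
   (8 * (a ^+ 2 * b ^+ 2 * L ^+ 2 / Num.sqrt n%:R))%:E)%E.
Proof.
apply: le_trans rademacher_single_column _; rewrite lee_fin.
have scale0 : 0 <= n%:R^-1 / 2 ^+ n :> R.
  by apply: divr_ge0; [rewrite invr_ge0 ler0n|exact: exprn_ge0].
apply: le_trans (ler_wpM2l scale0 sqdiff_rademacher) _.
have sn0 : 0 < Num.sqrt (n%:R : R) by rewrite sqrtr_gt0 ltr0n.
have sq_sqrt : Num.sqrt (n%:R : R) ^+ 2 = n%:R by rewrite sqr_sqrtr ?ler0n.
move: sq_sqrt sn0; move: (Num.sqrt n%:R) => s <- s0.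
by rewrite le_eqVlt; apply/orP; left; apply/eqP; field;
   rewrite (lt0r_neq0 s0) expf_neq0.
Qed.
End PairDistanceClass.

Definition rate_const (R : realType) : R := 8 / (Num.sqrt (ln (2 : R)) * ln 2).

Lemma rate_const_gt0 (R : realType) : 0 < rate_const R.
Proof.
have l2 : 0 < ln (2 : R) by apply: ln_gt0; lra.
by apply: divr_gt0 => //; apply: mulr_gt0; rewrite ?sqrtr_gt0.
Qed.

(* The bound 8 M / sqrt n is dominated by the stated rate, since both
   logarithmic factors are at least their value ln 2 > 0 at d = 1, N = 0. *)
Lemma rate_le (R : realType) (n d : nat) (M N : R) :
  (0 < n)%N -> (0 < d)%N -> 0 <= M -> 0 <= N ->
  8 * (M / Num.sqrt n%:R) <=
  rate_const R * (n%:R^-1 + M / Num.sqrt n%:R * Num.sqrt (ln (2 * d%:R)) * ln (2 + N)).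
Proof.
move=> n0 d0 M0 N0.
have l2 : 0 < ln (2 : R) by apply: ln_gt0; lra.
have s2 : 0 < Num.sqrt (ln (2 : R)) by rewrite sqrtr_gt0.
have sn0 : 0 < Num.sqrt (n%:R : R) by rewrite sqrtr_gt0 ltr0n.
have X0 : 0 <= M / Num.sqrt n%:R by apply: divr_ge0 => //; exact: ltW.
have sqrt_log : Num.sqrt (ln (2 : R)) <= Num.sqrt (ln (2 * d%:R)).
  have d1 : (1 <= d%:R :> R) by rewrite ler1n.
  rewrite ler_sqrt; last by apply: ln_ge0; lra.
  by rewrite ler_ln ?posrE; lra.
have log_N : ln (2 : R) <= ln (2 + N) by rewrite ler_ln ?posrE; lra.
have -> : 8 * (M / Num.sqrt n%:R) =
    rate_const R * (M / Num.sqrt n%:R * (Num.sqrt (ln 2) * ln 2)).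
  by rewrite /rate_const; field; rewrite (lt0r_neq0 s2) (lt0r_neq0 l2) (lt0r_neq0 sn0).
apply: ler_wpM2l; first exact/ltW/rate_const_gt0.
apply: le_trans (_ : _ <= M / Num.sqrt n%:R * (Num.sqrt (ln (2 * d%:R)) * ln (2 + N))) _.
  by apply: ler_wpM2l => //; apply: ler_pM => //; exact: ltW.
by rewrite mulrA -subr_ge0 addrK invr_ge0 ler0n.
Qed.

Theorem theorem2 (R : realType) :
  exists C : R, 0 < C /\
  forall (n d k : nat) (phi : R -> R) (L b a : R)
         (x x' : 'I_n -> 'cV[R]_d),
    (0 < n)%N -> (0 < d)%N -> (0 < k)%N ->
    0 <= L ->
    (forall u v : R, `|phi u - phi v| <= L * `|u - v|) ->
    phi 0 = 0 ->
    0 < b ->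
    (forall i, norm2 (x i) <= b) ->
    (forall i, norm2 (x' i) <= b) ->
    0 < a ->
    (rademacher (Fk phi x x' (@Gball R d k a)) <=
     (C * ((n%:R)^-1 +
           a ^+ 2 * b ^+ 2 * L ^+ 2 / Num.sqrt (n%:R)
           * Num.sqrt (ln (2 * d%:R))
           * ln (2 + n%:R * b ^+ 2 * a ^+ 2 * L ^+ 2)))%:E)%E.
Proof.
exists (rate_const R); split; first exact: rate_const_gt0.
move=> n d k phi L b a x x' n0 d0 k0 L0 phi_lip phi0 b0 xb x'b a0.
apply: le_trans (rademacher_Fk_rate n0 k0 L0 phi_lip phi0 b0 xb x'b a0) _.
rewrite lee_fin; apply: rate_le => //.
- by apply: mulr_ge0; [apply: mulr_ge0|]; exact: sqr_ge0.
- by apply: mulr_ge0; [apply: mulr_ge0; [apply: mulr_ge0|]|]; rewrite ?ler0n ?sqr_ge0.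
Qed.
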